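(* Let $G$ be a finite abstract simplicial complex with connection matrix $L$ and $g=L^{-1}$. Then for every $x\in G$, $g(x,x)=1-\chi(S(x))$.
   Context: A finite abstract simplicial complex $G$ is a finite set of non-empty finite sets closed under taking non-empty subsets. The connection matrix $L$ has $L(x,y)=1$ if $x\cap y\neq\emptyset$ and $0$ otherwise. The Barycentric refinement $G_1$ is the graph with vertex set $G$ where $x\neq y$ are adjacent iff $x\subset y$ or $y\subset x$. $S(x)$ is the set of $y\in G$ with $y\subsetneq x$ or $x\subsetneq y$, and $\chi(S(x))$ is the Euler characteristic $\sum_K(-1)^{|K|-1}$ over non-empty cliques $K$ of the subgraph of $G_1$ induced on $S(x)$. *)

From mathcomp Require Import all_boot all_order all_algebra.
Set Implicit Arguments. Unset Strict Implicit. Unset Printing Implicit Defensive.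
Import GRing.Theory Num.Theory.
Local Open Scope ring_scope.

Section Complex.
Variable V : finType.

Definition simplicial_complex (G : {set {set V}}) : Prop :=
  set0 \notin G /\
  forall x y : {set V}, x \in G -> y \subset x -> y != set0 -> y \in G.

Definition connection_matrix (G : {set {set V}}) : 'M[int]_(#|G|) :=
  \matrix_(i < #|G|, j < #|G|)
    (if (enum_val i :&: enum_val j) != set0 then 1 else 0).

Definition unit_sphere (G : {set {set V}}) (x : {set V}) : {set {set V}} :=
  [set y in G | (y \proper x) || (x \proper y)].

(* cliques in the Barycentric refinement G_1 (comparability graph) *)
Definition is_clique (K : {set {set V}}) : bool :=
  [forall a in K, forall b in K, (a != b) ==> ((a \proper b) || (b \proper a))].

Definition euler_char (A : {set {set V}}) : int :=
  \sum_(K : {set {set V}} | [&& K != set0, K \subset A & is_clique K])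
    (-1) ^+ (#|K|.-1).

End Complex.

From mathcomp Require Import all_boot all_order all_algebra.
Set Implicit Arguments. Unset Strict Implicit. Unset Printing Implicit Defensive.
Import GRing.Theory Num.Theory.
Local Open Scope ring_scope.

(* Let Z be the inclusion (zeta) matrix of G and D the diagonal matrix with
   entries -(-1)^|z|.  As G is closed under non-empty subsets, (Z^T D Z)(x,y)
   is minus the signed count of the non-empty subsets of x :&: y, which is 1
   exactly when x and y meet: L = Z^T D Z.  Moebius inversion on the boolean
   lattice inverts Z explicitly, so g = Z^-1 D Z^-T and
   g(x,x) = - sum of (-1)^|z| over the z in G containing x.
   On the other side, 1 - chi(A) is the signed count of all chains of A, the
   empty one included.  It is multiplicative on joins of posets and equals
   -(-1)^(|a|+|b|) on an open interval (a,b) of the boolean lattice; S(x) is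
   the join of the interval (set0,x) with the elements of G above x, and this
   gives the same sum. *)

Section SignSums.
Variables (R : comPzRingType) (V : finType).
Implicit Types a b D : {set V}.

Definition open_interval a b : {set {set V}} :=
  [set z : {set V} | (a \proper z) && (z \proper b)].

Lemma sum_sign_subsets D :
  \sum_(w : {set V} | w \subset D) (-1) ^+ #|w| = (D == set0)%:R :> R.
Proof.
have -> : (D == set0)%:R = \prod_(v : V) ((if v \in D then -1 else 0) + 1) :> R.
  have [-> | [d dD]] := set_0Vmem D.
    by rewrite eqxx big1 // => v _; rewrite inE add0r.
  rewrite (bigD1 d) //= dD addNr mul0r.
  by case: eqP dD => // ->; rewrite inE.
rewrite bigA_distr big_mkcond /=; apply: eq_big => // w _.
case: ifP => [/subsetP wD | /negbT/subsetPn[v vw vD]].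
  rewrite -prodr_const big_mkcond; apply: eq_bigr => v _.
  by case: ifP => // /wD ->.
by rewrite (bigD1 v) //= vw (negbTE vD) mul0r.
Qed.

Lemma sum_sign_interval a b :
  \sum_(m : {set V} | (a \subset m) && (m \subset b)) (-1) ^+ #|m|
    = (-1) ^+ #|a| *+ (a == b) :> R.
Proof.
have [ab | aNb] := boolP (a \subset b); last first.
  rewrite big_pred0 => [|m]; last by apply: contraNF aNb => /andP[]; apply: subset_trans.
  by case: eqP aNb => // ->; rewrite subxx.
rewrite (reindex_onto (fun w => a :|: w) (fun m => m :\: a)); last first.
  by move=> m /andP[am _]; rewrite -{2}(setID m a) (setIidPr am).
rewrite (eq_bigl (fun w : {set V} => w \subset b :\: a)); last first.
  move=> w; rewrite subsetUl subUset ab setDUl setDv set0U subsetD.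
  by congr (_ && _); apply/eqP/idP => [/setDidPl | /setDidPl].
rewrite (eq_bigr (fun w : {set V} => (-1) ^+ #|a| * (-1) ^+ #|w|)); last first.
  move=> w; rewrite subsetD disjoint_sym => /andP[_ aw].
  by rewrite -exprD cardsU (disjoint_setI0 aw) cards0 subn0.
by rewrite -big_distrr /= sum_sign_subsets mulr_natr setD_eq0 eqEsubset ab.
Qed.

Lemma sum_sign_open_interval a b : a \proper b ->
  \sum_(m in open_interval a b) (-1) ^+ #|m| = - ((-1) ^+ #|a| + (-1) ^+ #|b|) :> R.
Proof.
rewrite properEneq => /andP[ab sab].
have := sum_sign_interval a b; rewrite (negbTE ab) mulr0n.
rewrite (bigD1 a) /= ?subxx ?sab // (bigD1 b) /= ?subxx ?sab ?(eq_sym b) //.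
rewrite (eq_bigl (mem (open_interval a b))); last first.
  move=> m; rewrite !inE !properEneq -andbA andbACA [m == a]eq_sym.
  by case: (a \subset m); case: (m \subset b); rewrite ?andbT ?andbF.
by move/eqP; rewrite addrA addrC addr_eq0 => /eqP.
Qed.

End SignSums.

Section CliqueSums.
Variable V : finType.
Implicit Types (a b m : {set V}) (A B U K : {set {set V}}).

Lemma is_cliqueP K : reflect
  {in K &, forall a b, a != b -> (a \proper b) || (b \proper a)} (is_clique K).
Proof.
apply: (iffP forall_inP) => [cK a b aK bK | cK a aK].
  exact/implyP/(forall_inP (cK a aK)).
by apply/forall_inP => b bK; apply/implyP/cK.
Qed.

Lemma is_clique0 : is_clique (set0 : {set {set V}}).
Proof. by apply/is_cliqueP => a b; rewrite inE. Qed.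

Lemma sub_clique K K' : K' \subset K -> is_clique K -> is_clique K'.
Proof.
move=> /subsetP sKK' /is_cliqueP cK.
by apply/is_cliqueP => a b /sKK' aK /sKK'; apply: cK.
Qed.

Definition greatest K m := (m \in K) && [forall k in K, k \subset m].

Lemma greatest_uniq K m m' : greatest K m -> greatest K m' -> m = m'.
Proof.
move=> /andP[mK /forall_inP Km] /andP[m'K /forall_inP Km'].
by apply/eqP; rewrite eqEsubset Km' ?Km.
Qed.

Lemma clique_greatest K : K != set0 -> is_clique K -> exists m, greatest K m.
Proof.
rewrite -card_gt0 => /(eq_bigmax_cond (fun k : {set V} => #|k|))[m mK maxm].
move=> /is_cliqueP cK; exists m; rewrite /greatest mK; apply/forall_inP => k kK.
have [-> // | km] := eqVneq k m.
case/orP: (cK k m kK mK km) => [/proper_sub // | mk].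
move: (leq_bigmax_cond (F := fun k : {set V} => #|k|) _ kK).
by rewrite maxm leqNgt (proper_card mk).
Qed.

Definition clique_sum A : int :=
  \sum_(K : {set {set V}} | (K \subset A) && is_clique K) (-1) ^+ #|K|.

Lemma clique_sumE A : clique_sum A = 1 - euler_char A.
Proof.
rewrite /clique_sum /euler_char (bigD1 set0) /= ?sub0set ?is_clique0 //.
rewrite cards0 expr0 -sumrN; congr (1 + _); apply: eq_big => [K | K /andP[_ K0]].
  by rewrite andbC andbA.
by rewrite -[in LHS](prednK (_ : 0 < #|K|)%N) ?card_gt0 // exprS mulN1r.
Qed.

Definition below A m := [set z in A | z \proper m].
Definition above A m := [set z in A | m \proper z].

(* Adjoining m maps the chains below m bijectively onto the chains of A with
   greatest element m; the right-hand side is the shape produced by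
   [reindex_onto]. *)
Lemma clique_below_setU1 A m K : m \in A ->
  (K \subset below A m) && is_clique K =
  [&& m |: K \subset A, is_clique (m |: K) & greatest (m |: K) m]
    && ((m |: K) :\ m == K).
Proof.
move=> mA; apply/andP/andP => [[/subsetP Km cK] | ].
  have below_A k : k \in K -> (k \in A) && (k \proper m) by move/Km; rewrite inE.
  have mK : m \notin K by apply/negP => /below_A; rewrite properxx andbF.
  split; last by rewrite setU1K.
  apply/and3P; split.
  - by rewrite subUset sub1set mA; apply/subsetP => k /below_A /andP[].
  - apply/is_cliqueP => a b /setU1P[-> | aK] /setU1P[-> | bK]; first by rewrite eqxx.
    + by case/andP: (below_A b bK) => _ ->; rewrite orbT.
    + by case/andP: (below_A a aK) => _ ->.
    + exact: (is_cliqueP _ cK).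
  - rewrite /greatest setU11; apply/forall_inP => k /setU1P[-> // | /below_A /andP[_]].
    exact: proper_sub.
move=> [/and3P[mKA cmK /andP[_ /forall_inP mtop]] /eqP mK].
have mK' : m \notin K by rewrite -mK setD11.
split; last by apply: sub_clique cmK; apply: subsetUr.
apply/subsetP => k kK; have kmK : k \in m |: K by rewrite setU1r.
rewrite inE (subsetP mKA _ kmK) properEneq mtop // andbT.
by apply: contraNneq mK' => <-.
Qed.

Lemma clique_sum_below A m : m \in A ->
  clique_sum (below A m) =
  - \sum_(K : {set {set V}} | [&& K \subset A, is_clique K & greatest K m])
      (-1) ^+ #|K|.
Proof.
move=> mA; rewrite (reindex_onto (fun K => m |: K) (fun K => K :\ m)) /=; last first.
  by move=> K /and3P[_ _ /andP[mK _]]; rewrite setD1K.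
rewrite /clique_sum -sumrN; apply: eq_big => [K | K]; first exact: clique_below_setU1.
move=> /andP[/subsetP Km _]; have mK : m \notin K.
  by apply/negP => /Km; rewrite inE properxx andbF.
by rewrite cardsU1 mK exprS mulN1r opprK.
Qed.

(* Group the non-empty chains of A by their (unique) greatest element. *)
Lemma clique_sum_rec A : clique_sum A = 1 - \sum_(m in A) clique_sum (below A m).
Proof.
have sum_greatest K : (K \subset A) && is_clique K ->
    \sum_(m in A | greatest K m) (-1) ^+ #|K| = (-1) ^+ #|K| *+ (K != set0) :> int.
  move=> /andP[/subsetP KA cK]; have [-> | K0] := eqVneq K set0.
    by rewrite big_pred0 // => m; rewrite /greatest inE andbF.
  have [m mtop] := clique_greatest K0 cK; rewrite (big_pred1 m) // => m'.
  apply/andP/eqP => [[_ /greatest_uniq/(_ mtop)] // | ->].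
  by split; first by apply: KA; case/andP: mtop.
under eq_bigr => m mA do rewrite clique_sum_below //.
rewrite sumrN opprK (exchange_big_dep (fun K => (K \subset A) && is_clique K)) /=; last first.
  by move=> m K _ /and3P[-> ->].
rewrite /clique_sum (bigD1 set0) /= ?sub0set ?is_clique0 // cards0 expr0.
rewrite [in RHS](bigD1 set0) /= ?sub0set ?is_clique0 // sum_greatest ?sub0set ?is_clique0 //.
rewrite eqxx mulr0n add0r; congr (1 + _); apply: eq_bigr => K /andP[cK K0].
rewrite (eq_bigl (fun m => (m \in A) && greatest K m)) ?sum_greatest ?K0 // => m.
by case/andP: cK => -> ->.
Qed.

Lemma clique_sum_join B U : {in B & U, forall b u : {set V}, b \proper u} ->
  clique_sum (B :|: U) = clique_sum B * clique_sum U.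
Proof.
have [n] := ubnP #|U|; elim: n => // n IHn in U *; rewrite ltnS => leUn BU.
have disjBU : [disjoint B & U].
  apply/pred0P => z /=; apply/negbTE/andP => -[zB zU].
  by have := BU z z zB zU; rewrite properxx.
have belowB m : m \in B -> clique_sum (below (B :|: U) m) = clique_sum (below B m).
  move=> mB; congr clique_sum; apply/setP => z; rewrite !inE.
  have [zU | _] := boolP (z \in U); last by rewrite orbF.
  by rewrite (contraNF (@proper_sub _ _ _) (proper_subn (BU m z mB zU))) !andbF.
have belowU m : m \in U ->
    clique_sum (below (B :|: U) m) = clique_sum B * clique_sum (below U m).
  move=> mU; have -> : below (B :|: U) m = B :|: below U m.
    by apply/setP => z; rewrite !inE; have [zB | //] := boolP (z \in B); rewrite BU.
  apply: IHn => [|b z bB]; last by rewrite inE => /andP[zU _]; apply: BU.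
  apply: leq_trans leUn; apply: proper_card; rewrite properEneq; apply/andP; split.
    by apply: contraTneq mU => <-; rewrite inE properxx andbF.
  by apply/subsetP => z; rewrite inE => /andP[].
rewrite clique_sum_rec (eq_bigl [predU B & U]) => [|z]; last by rewrite !inE.
rewrite bigU //= (eq_bigr _ belowB) (eq_bigr _ belowU) -big_distrr /=.
rewrite [clique_sum B]clique_sum_rec [clique_sum U]clique_sum_rec.
by rewrite mulrBr mulr1 opprD addrA.
Qed.

Lemma clique_sum_open_interval a b : a \proper b ->
  clique_sum (open_interval a b) = - ((-1) ^+ #|a| * (-1) ^+ #|b|).
Proof.
have [n] := ubnP #|b|; elim: n => // n IHn in b *; rewrite ltnS => lebn ab.
have below_interval m : m \in open_interval a b ->
    clique_sum (below (open_interval a b) m) = - ((-1) ^+ #|a| * (-1) ^+ #|m|).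
  rewrite inE => /andP[am mb].
  have -> : below (open_interval a b) m = open_interval a m.
    apply/setP => z; rewrite !inE -andbA.
    by have [zm | _] := boolP (z \proper m); rewrite ?andbF // (proper_trans zm mb).
  exact: IHn (leq_trans (proper_card mb) lebn) am.
rewrite clique_sum_rec (eq_bigr _ below_interval) sumrN opprK -big_distrr /=.
rewrite sum_sign_open_interval // mulrN mulrDr -expr2 sqrr_sign.
by rewrite opprD addrA subrr add0r.
Qed.

End CliqueSums.

Section UnitSphere.
Variables (V : finType) (G : {set {set V}}).
Hypothesis scG : simplicial_complex G.
Implicit Types x y z : {set V}.

Lemma simplex_neq0 x : x \in G -> x != set0.
Proof. by apply: contraTneq => ->; case: scG. Qed.

Lemma face_in_complex x z : x \in G -> z \subset x -> (z \in G) = (z != set0).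
Proof.
move=> xG zx; apply/idP/idP => [|z0]; first exact: simplex_neq0.
by case: scG => _ /(_ x z xG zx z0).
Qed.

Lemma mem_complex_between x y z :
  x \in G -> y \in G -> x \subset z -> z \subset y -> z \in G.
Proof.
move=> xG yG xz zy; rewrite (face_in_complex yG zy).
by apply: contraTneq xz => ->; rewrite subset0 simplex_neq0.
Qed.

Lemma below_simplex x : x \in G -> below G x = open_interval set0 x.
Proof.
move=> xG; apply/setP => z; rewrite !inE proper0 andbC.
have [zx | _] := boolP (z \proper x); last by rewrite andbF.
by rewrite (face_in_complex xG (proper_sub zx)) andbT.
Qed.

Lemma clique_sum_above x : x \in G ->
  clique_sum (above G x) = 1 + (-1) ^+ #|x| * \sum_(m in above G x) (-1) ^+ #|m|.
Proof.
move=> xG; have below_above m : m \in above G x ->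
    clique_sum (below (above G x) m) = - ((-1) ^+ #|x| * (-1) ^+ #|m|).
  rewrite inE => /andP[mG xm]; have -> : below (above G x) m = open_interval x m.
    apply/setP => z; rewrite !in_set -andbA.
    have [xz | _] := boolP (x \proper z); rewrite ?andbF //.
    have [zm | _] := boolP (z \proper m); rewrite ?andbF ?andbT //.
    exact: mem_complex_between xG mG (proper_sub xz) (proper_sub zm).
  exact: clique_sum_open_interval.
by rewrite clique_sum_rec (eq_bigr _ below_above) sumrN opprK big_distrr.
Qed.

Lemma clique_sum_unit_sphere x : x \in G ->
  clique_sum (unit_sphere G x) = - \sum_(z in G | x \subset z) (-1) ^+ #|z|.
Proof.
move=> xG; have -> : unit_sphere G x = below G x :|: above G x.
  by apply/setP => y; rewrite !inE andb_orr.
rewrite clique_sum_join => [|b u]; last first.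
  by rewrite !inE => /andP[_ bx] /andP[_]; apply: proper_trans.
rewrite below_simplex // clique_sum_open_interval ?proper0 ?simplex_neq0 //.
rewrite clique_sum_above // [in RHS](bigD1 x) ?xG ?subxx //=.
rewrite [in RHS](eq_bigl (fun z => z \in above G x)) => [|z]; last first.
  by rewrite in_set properEneq eq_sym -andbA [(x != z) && _]andbC.
by rewrite cards0 expr0 mul1r mulNr mulrDr mulr1 mulrA -expr2 sqrr_sign mul1r opprD.
Qed.

End UnitSphere.

Section ComplexMatrices.
Variables (R : pzRingType) (V : finType) (G : {set {set V}}).
Implicit Types f g : {set V} -> {set V} -> R.

Definition set_mx f : 'M[R]_#|G| :=
  \matrix_(i < #|G|, j < #|G|) f (enum_val i) (enum_val j).

Lemma eq_set_mx f g : {in G &, f =2 g} -> set_mx f = set_mx g.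
Proof. by move=> fg; apply/matrixP => i j; rewrite !mxE fg ?enum_valP. Qed.

Lemma set_mx1 : set_mx (fun x y => (x == y)%:R) = 1%:M.
Proof. by apply/matrixP => i j; rewrite !mxE (inj_eq enum_val_inj). Qed.

Lemma tr_set_mx f : (set_mx f)^T = set_mx (fun x y => f y x).
Proof. by apply/matrixP => i j; rewrite !mxE. Qed.

Lemma mul_set_mx f g :
  set_mx f *m set_mx g = set_mx (fun x y => \sum_(z in G) f x z * g z y).
Proof.
apply/matrixP => i j; rewrite !mxE.
rewrite (big_enum_val (fun z => f (enum_val i) z * g z (enum_val j))).
by apply: eq_bigr => k _; rewrite !mxE.
Qed.

Lemma mul_set_mx_diag f (d : {set V} -> R) :
  set_mx f *m set_mx (fun x y => d x *+ (x == y)) = set_mx (fun x y => f x y * d y).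
Proof.
rewrite mul_set_mx; apply: eq_set_mx => x y _ yG; rewrite (bigD1 y) //= eqxx mulr1n.
by rewrite big1 ?addr0 // => z /andP[_ /negbTE->]; rewrite mulr0n mulr0.
Qed.

End ComplexMatrices.

Section ConnectionInverse.
Variables (V : finType) (G : {set {set V}}).
Hypothesis scG : simplicial_complex G.
Local Notation sg x := ((-1) ^+ #|x| : int).

Lemma connection_set_mx :
  connection_matrix G = set_mx G (fun x y => if x :&: y != set0 then 1 else 0).
Proof. by []. Qed.

Definition zeta_mx : 'M[int]_#|G| := set_mx G (fun x y => (x \subset y)%:R).

Definition moebius_mx : 'M[int]_#|G| :=
  set_mx G (fun x y => if x \subset y then sg x * sg y else 0).

Definition sign_mx : 'M[int]_#|G| := set_mx G (fun x y => - sg x *+ (x == y)).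

Definition connection_inverse := moebius_mx *m sign_mx *m moebius_mx^T.

Lemma connection_matrix_factor :
  connection_matrix G = zeta_mx^T *m sign_mx *m zeta_mx.
Proof.
rewrite connection_set_mx tr_set_mx mul_set_mx_diag mul_set_mx; apply: eq_set_mx => x y xG _ /=.
rewrite (eq_bigr (fun z : {set V} => if z \subset x :&: y then - sg z else 0)); last first.
  move=> z _; rewrite subsetI.
  by case: (z \subset x); case: (z \subset y); rewrite /= ?mul1r ?mul0r ?mulr1 ?mulr0.
rewrite -big_mkcondr /= (eq_bigl (fun z : {set V} => (z \subset x :&: y) && (z != set0))).
  have := sum_sign_subsets int (x :&: y).
  rewrite (bigD1 set0) ?sub0set //= cards0 expr0 sumrN => /(canRL (addKr 1)) ->.
  by case: (_ == set0); rewrite ?opprD ?opprK ?addNr ?addr0.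
move=> z; rewrite subsetI andbCA.
by case: (boolP (z \subset x)) => // /(face_in_complex scG xG) ->; rewrite /= andbC.
Qed.

Lemma zeta_moebius : zeta_mx *m moebius_mx = 1%:M.
Proof.
rewrite mul_set_mx -set_mx1; apply: eq_set_mx => x y xG yG /=.
rewrite (eq_bigr (fun z : {set V} =>
    if (x \subset z) && (z \subset y) then sg z * sg y else 0)); last first.
  by move=> z _; case: (x \subset z); rewrite ?mul1r ?mul0r.
rewrite -big_mkcondr /= (eq_bigl (fun z : {set V} => (x \subset z) && (z \subset y))) => [|z].
  rewrite -big_distrl /= sum_sign_interval.
  by case: eqP => [-> | _]; rewrite ?mulr1n -?expr2 ?sqrr_sign ?mul0r.
apply/andP/idP => [[] // | /andP[xz zy]]; rewrite xz zy; split=> //.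
by apply: (mem_complex_between scG xG yG).
Qed.

Lemma sign_mx_invol : sign_mx *m sign_mx = 1%:M.
Proof.
rewrite mul_set_mx_diag -set_mx1; apply: eq_set_mx => x y _ _.
by case: eqP => [-> | _]; rewrite ?mulr0n ?mul0r // mulrNN -expr2 sqrr_sign.
Qed.

Lemma mulmx_connection_inverse : connection_matrix G *m connection_inverse = 1%:M.
Proof.
rewrite connection_matrix_factor /connection_inverse !mulmxA.
rewrite -(mulmxA _ zeta_mx) zeta_moebius mulmx1.
rewrite -(mulmxA _ sign_mx sign_mx) sign_mx_invol mulmx1.
by rewrite -trmx_mul (mulmx1C zeta_moebius) trmx1.
Qed.

Lemma connection_inverse_diag i :
  connection_inverse i i = - \sum_(z in G | enum_val i \subset z) sg z.
Proof.
rewrite /connection_inverse tr_set_mx mul_set_mx_diag mul_set_mx mxE.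
rewrite -sumrN big_mkcondr /=; apply: eq_bigr => z _.
by case: (enum_val i \subset z); rewrite ?mul0r ?oppr0 // mulrN mulNr -!mulrA !signrMK.
Qed.

End ConnectionInverse.

Theorem mainTheorem9 (V : finType) (G : {set {set V}}) :
  simplicial_complex G ->
  connection_matrix G \in unitmx /\
  forall i : 'I_#|G|,
    (invmx (connection_matrix G)) i i
      = 1 - euler_char (unit_sphere G (enum_val i)).
Proof.
move=> scG; have L_inv := mulmx_connection_inverse scG.
have [L_unit _] := mulmx1_unit L_inv; split=> // i.
have -> : invmx (connection_matrix G) = connection_inverse G.
  by rewrite -[RHS](mulKmx L_unit) L_inv mulmx1.
by rewrite connection_inverse_diag -clique_sum_unit_sphere ?enum_valP // clique_sumE.
Qed.
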